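(* Let $(\mathcal T,\otimes)$ be an $M$-compatible tensor triangulated category and let $\mathscr E$ be a split generator of $\mathcal T$. Let $\tau_{\mathscr E}=-\otimes\mathscr E$ (a triangulated endofunctor of $\mathcal T$). Then $\mathrm{Spc}_\otimes\mathcal T=\mathrm{Spc}^{\tau_{\mathscr E}}\mathcal T\subset\mathrm{Spc}_\triangle\mathcal T$.
   Context: All categories and functors are $k$-linear; triangulated categories are essentially small. For a triangulated category $\mathcal T$, $\mathrm{Th}(\mathcal T)$ is the set of thick subcategories (triangulated full subcategories closed under direct summands) with the Balmer topology (closed sets $V(\mathcal E)=\{\mathcal I:\mathcal I\cap\mathcal E=\emptyset\}$); $\mathscr E$ is a split generator if the smallest thick subcategory containing $\mathscr E$ is $\mathcal T$. A thick subcategory $\mathcal P$ is prime if the thick subcategories strictly containing it have a smallest element; $\mathrm{Spc}_\triangle\mathcal T$ is the subspace of prime thick subcategories. For a triangulated endofunctor $\tau$, $\tau^{-1}(\mathcal P)=\{M:\tau(M)\in\mathcal P\}$ and $\mathrm{Spc}^\tau\mathcal T=\{\mathcal P\in\mathrm{Spc}_\triangle\mathcal T:\tau^{-1}(\mathcal P)=\mathcal P\}$. In a tt-category $(\mathcal T,\otimes)$: a $\otimes$-ideal is a thick $\mathcal I$ with $M\otimes N\in\mathcal I$ for all $M\in\mathcal T,N\in\mathcal I$; a prime $\otimes$-ideal is a $\otimes$-ideal $\mathcal P\neq\mathcal T$ with $M\otimes N\in\mathcal P\Rightarrow M\in\mathcal P$ or $N\in\mathcal P$; $\mathrm{Spc}_\otimes\mathcal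 T$ is the subspace of prime $\otimes$-ideals. $(\mathcal T,\otimes)$ is $M$-compatible if a thick subcategory is a prime $\otimes$-ideal if and only if it is a prime thick subcategory that is a $\otimes$-ideal. *)

From HB Require Import structures.
From mathcomp Require Import all_boot all_algebra.
Set Implicit Arguments. Unset Strict Implicit. Unset Printing Implicit Defensive.
Import GRing.Theory.
Local Open Scope ring_scope.

Record ttdata (k : fieldType) := TTData {
  Ob : Type;
  Hom : Ob -> Ob -> lmodType k;
  ccomp : forall a b c : Ob, Hom b c -> Hom a b -> Hom a c;
  idm : forall a : Ob, Hom a a;
  zob : Ob;
  shift : Ob -> Ob;
  shiftH : forall a b : Ob, Hom a b -> Hom (shift a) (shift b);
  dist : forall x y z : Ob, Hom x y -> Hom y z -> Hom z (shift x) -> Prop;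
  tens : Ob -> Ob -> Ob;
  tensH : forall a b a' b' : Ob, Hom a a' -> Hom b b' -> Hom (tens a b) (tens a' b');
  tunit : Ob;
  tassoc : forall a b c : Ob, Hom (tens (tens a b) c) (tens a (tens b c));
  lunit : forall a : Ob, Hom (tens tunit a) a;
  runit : forall a : Ob, Hom (tens a tunit) a;
  braid : forall a b : Ob, Hom (tens a b) (tens b a);
  shl : forall a b : Ob, Hom (tens (shift a) b) (shift (tens a b));
  shr : forall a b : Ob, Hom (tens a (shift b)) (shift (tens a b));
}.

Arguments ccomp {k T a b c} : rename.
Arguments idm {k T} : rename.
Arguments zob {k T} : rename.
Arguments shift {k T} : rename.
Arguments shiftH {k T a b} : rename.
Arguments dist {k T x y z} : rename.
Arguments tens {k T} : rename.
Arguments tensH {k T a b a' b'} : rename.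
Arguments tunit {k T} : rename.
Arguments tassoc {k T} : rename.
Arguments lunit {k T} : rename.
Arguments runit {k T} : rename.
Arguments braid {k T} : rename.
Arguments shl {k T} : rename.
Arguments shr {k T} : rename.

Notation "g \oc f" := (ccomp g f) (at level 40, left associativity).
Notation "a \ot b" := (tens a b) (at level 35, right associativity).

Section TT.
Variables (k : fieldType) (T : ttdata k).
Local Notation Ob := (Ob T).
Local Notation Hom := (@Hom k T).

Definition is_iso (a b : Ob) (f : Hom a b) : Prop :=
  exists g : Hom b a, g \oc f = idm a /\ f \oc g = idm b.

Definition is_biprod (a b c : Ob) (i1 : Hom a c) (i2 : Hom b c)
    (p1 : Hom c a) (p2 : Hom c b) : Prop :=
  [/\ p1 \oc i1 = idm a, p2 \oc i2 = idm b, p1 \oc i2 = 0, p2 \oc i1 = 0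
    & i1 \oc p1 + i2 \oc p2 = idm c].

Definition is_kcat : Prop :=
  [/\ (forall a b c d (f : Hom a b) (g : Hom b c) (h : Hom c d),
          h \oc (g \oc f) = (h \oc g) \oc f),
      (forall a b (f : Hom a b), idm b \oc f = f),
      (forall a b (f : Hom a b), f \oc idm a = f),
      (forall a b c (r : k) (g g' : Hom b c) (f : Hom a b),
          (r *: g + g') \oc f = r *: (g \oc f) + g' \oc f)
    & (forall a b c (r : k) (g : Hom b c) (f f' : Hom a b),
          g \oc (r *: f + f') = r *: (g \oc f) + g \oc f')].

Definition is_additive : Prop :=
  [/\ (forall a (f : Hom zob a), f = 0),
      (forall a (f : Hom a zob), f = 0)
    & (forall a b, exists c (i1 : Hom a c) (i2 : Hom b c) (p1 : Hom c a) (p2 : Hom c b),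
          is_biprod i1 i2 p1 p2)].

Definition shift_equivalence : Prop :=
  [/\ (forall a b (r : k) (f g : Hom a b), shiftH (r *: f + g) = r *: shiftH f + shiftH g),
      (forall a b c (f : Hom a b) (g : Hom b c), shiftH (g \oc f) = shiftH g \oc shiftH f),
      (forall a : Ob, shiftH (idm a) = idm (shift a)),
      (forall a b, bijective (@shiftH k T a b))
    & (forall y, exists x (f : Hom (shift x) y), is_iso f)].

Definition TR1 : Prop :=
  [/\ (forall x y z (f : Hom x y) (g : Hom y z) (h : Hom z (shift x))
          x' y' z' (f' : Hom x' y') (g' : Hom y' z') (h' : Hom z' (shift x'))
          (a : Hom x x') (b : Hom y y') (c : Hom z z'),
          is_iso a -> is_iso b -> is_iso c ->
          b \oc f = f' \oc a -> c \oc g = g' \oc b -> shiftH a \oc h = h' \oc c ->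
          dist f g h -> dist f' g' h'),
      (forall x : Ob, dist (idm x) (0 : Hom x zob) (0 : Hom zob (shift x)))
    & (forall x y (f : Hom x y), exists z (g : Hom y z) (h : Hom z (shift x)), dist f g h)].

Definition TR2 : Prop :=
  forall x y z (f : Hom x y) (g : Hom y z) (h : Hom z (shift x)),
    dist f g h <-> dist g h (- shiftH f).

Definition TR3 : Prop :=
  forall x y z (f : Hom x y) (g : Hom y z) (h : Hom z (shift x))
         x' y' z' (f' : Hom x' y') (g' : Hom y' z') (h' : Hom z' (shift x'))
         (a : Hom x x') (b : Hom y y'),
    dist f g h -> dist f' g' h' -> b \oc f = f' \oc a ->
    exists c : Hom z z', c \oc g = g' \oc b /\ shiftH a \oc h = h' \oc c.

Definition TR4 : Prop :=
  forall x y z (f : Hom x y) (g : Hom y z)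
         q1 (p1 : Hom y q1) (d1 : Hom q1 (shift x))
         q2 (p2 : Hom z q2) (d2 : Hom q2 (shift x))
         q3 (p3 : Hom z q3) (d3 : Hom q3 (shift y)),
    dist f p1 d1 -> dist (g \oc f) p2 d2 -> dist g p3 d3 ->
    exists (a : Hom q1 q2) (b : Hom q2 q3),
      [/\ dist a b (shiftH p1 \oc d3),
          a \oc p1 = p2 \oc g, d2 \oc a = d1,
          b \oc p2 = p3 & d3 \oc b = shiftH f \oc d2].

Definition is_triangulated : Prop :=
  [/\ is_kcat, is_additive, shift_equivalence & [/\ TR1, TR2, TR3 & TR4]].

Definition is_symmetric_monoidal : Prop :=
  [/\ [/\ (forall a b a' b' (r : k) (f f' : Hom a a') (g : Hom b b'),
          tensH (r *: f + f') g = r *: tensH f g + tensH f' g),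
      (forall a b a' b' (r : k) (f : Hom a a') (g g' : Hom b b'),
          tensH f (r *: g + g') = r *: tensH f g + tensH f g'),
      (forall a b a1 b1 a2 b2 (f : Hom a a1) (f' : Hom a1 a2) (g : Hom b b1) (g' : Hom b1 b2),
          tensH (f' \oc f) (g' \oc g) = tensH f' g' \oc tensH f g)
    & (forall a b : Ob, tensH (idm a) (idm b) = idm (a \ot b))],
      (forall a b c : Ob, is_iso (tassoc a b c)) /\ (forall a : Ob, is_iso (lunit a)) /\
      (forall a : Ob, is_iso (runit a)),
      [/\ (forall a b c a' b' c' (f : Hom a a') (g : Hom b b') (h : Hom c c'),
             tensH f (tensH g h) \oc tassoc a b c = tassoc a' b' c' \oc tensH (tensH f g) h),
          (forall a b (f : Hom a b), f \oc lunit a = lunit b \oc tensH (idm tunit) f),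
          (forall a b (f : Hom a b), f \oc runit a = runit b \oc tensH f (idm tunit))
        & (forall a b a' b' (f : Hom a a') (g : Hom b b'),
             tensH g f \oc braid a b = braid a' b' \oc tensH f g)]
    &
      [/\ (forall a b c d : Ob,
             tassoc a b (c \ot d) \oc tassoc (a \ot b) c d
             = tensH (idm a) (tassoc b c d) \oc tassoc a (b \ot c) d
               \oc tensH (tassoc a b c) (idm d)),
          (forall a b : Ob,
             tensH (idm a) (lunit b) \oc tassoc a tunit b = tensH (runit a) (idm b)),
          (forall a b : Ob, braid b a \oc braid a b = idm (a \ot b))
        & (forall a b c : Ob,
             tassoc b c a \oc braid a (b \ot c) \oc tassoc a b c
             = tensH (idm b) (braid a c) \oc tassoc b a c \oc tensH (braid a b) (idm c))]].

Definition tensor_exact : Prop :=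
  [/\ (forall a b : Ob, is_iso (shl a b)) /\ (forall a b : Ob, is_iso (shr a b)),
      (forall a b a' b' (f : Hom a a') (g : Hom b b'),
          shiftH (tensH f g) \oc shl a b = shl a' b' \oc tensH (shiftH f) g) /\
      (forall a b a' b' (f : Hom a a') (g : Hom b b'),
          shiftH (tensH f g) \oc shr a b = shr a' b' \oc tensH f (shiftH g)),
      (forall (c : Ob) x y z (f : Hom x y) (g : Hom y z) (h : Hom z (shift x)),
          dist f g h ->
          dist (tensH f (idm c)) (tensH g (idm c)) (shl x c \oc tensH h (idm c))),
      (forall (c : Ob) x y z (f : Hom x y) (g : Hom y z) (h : Hom z (shift x)),
          dist f g h ->
          dist (tensH (idm c) f) (tensH (idm c) g) (shr c x \oc tensH (idm c) h))
    & (forall a b : Ob,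
          shiftH (shr a b) \oc shl a (shift b) = - (shiftH (shl a b) \oc shr (shift a) b))].

Definition is_tt_category : Prop :=
  [/\ is_triangulated, is_symmetric_monoidal & tensor_exact].

(* thick subcategories, as full replete subcategories (predicates on objects) *)
Definition thick (I : Ob -> Prop) : Prop :=
  [/\ I zob,
      (forall a b (f : Hom a b), is_iso f -> I a -> I b),
      (forall x, I x <-> I (shift x)),
      (forall x y z (f : Hom x y) (g : Hom y z) (h : Hom z (shift x)),
          dist f g h -> [/\ (I x -> I y -> I z), (I y -> I z -> I x) & (I x -> I z -> I y)])
    & (forall a b c (i1 : Hom a c) (i2 : Hom b c) (p1 : Hom c a) (p2 : Hom c b),
          is_biprod i1 i2 p1 p2 -> I c -> I a)].

Definition subpred (I J : Ob -> Prop) := forall x, I x -> J x.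
Definition strict_subpred (I J : Ob -> Prop) := subpred I J /\ exists x, J x /\ ~ I x.

Definition prime_thick (P : Ob -> Prop) : Prop :=
  thick P /\
  exists Q, [/\ thick Q, strict_subpred P Q &
                forall R, thick R -> strict_subpred P R -> subpred Q R].

Definition tensor_ideal (I : Ob -> Prop) : Prop :=
  thick I /\ forall M N, I N -> I (M \ot N).

Definition prime_tensor_ideal (P : Ob -> Prop) : Prop :=
  [/\ tensor_ideal P, (exists x, ~ P x)
    & forall M N, P (M \ot N) -> P M \/ P N].

Definition M_compatible : Prop :=
  forall P, thick P -> (prime_tensor_ideal P <-> prime_thick P /\ tensor_ideal P).

Definition split_generator (E : Ob) : Prop :=
  forall I, thick I -> I E -> forall x, I x.

Definition tau_inv (E : Ob) (P : Ob -> Prop) : Ob -> Prop := fun M => P (M \ot E).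

Definition Spc_tensor (P : Ob -> Prop) : Prop := thick P /\ prime_tensor_ideal P.
Definition Spc_tri (P : Ob -> Prop) : Prop := thick P /\ prime_thick P.
Definition Spc_tau (E : Ob) (P : Ob -> Prop) : Prop :=
  Spc_tri P /\ forall M, tau_inv E P M <-> P M.

End TT.

From Pilot Require Import Defs.
From mathcomp Require Import all_boot all_algebra.
Set Implicit Arguments. Unset Strict Implicit. Unset Printing Implicit Defensive.
Import GRing.Theory.
Local Open Scope ring_scope.

(* A prime tensor ideal P is tau_E-stable: M (x) E in P forces M in P, since
   E in P would make P everything (E split-generates); the converse inclusion
   holds in any tensor ideal.  Conversely, if P is tau_E-stable and N is in P,
   the objects X with X (x) N in P form a thick subcategory (- (x) N is exact)
   containing E, since E (x) N ~ N (x) E is in P; so it is everything and P is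
   a tensor ideal.  M-compatibility then identifies both kinds of primes. *)

Section TensorTriangulated.
Variables (k : fieldType) (T : ttdata k).
Local Notation Hom := (@Defs.Hom k T).
Hypotheses (hK : is_kcat T) (hA : is_additive T)
  (hS : is_symmetric_monoidal T) (hX : tensor_exact T).

Lemma compm0 (a b c : Ob T) (g : Hom b c) : g \oc (0 : Hom a b) = 0.
Proof.
case: hK => _ _ _ _ comp_linear.
have := comp_linear a b c (-1) g 0 0.
by rewrite scaler0 addr0 scaleN1r addNr.
Qed.

Lemma tensH0l (a b a' b' : Ob T) (g : Hom b b') : tensH (0 : Hom a a') g = 0.
Proof.
case: hS => [[tens_linear _ _ _] _ _ _].
have := tens_linear a b a' b' (-1) 0 0 g.
by rewrite scaler0 addr0 scaleN1r addNr.
Qed.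

Lemma tensHDl (a b a' b' : Ob T) (f f' : Hom a a') (g : Hom b b') :
  tensH (f + f') g = tensH f g + tensH f' g.
Proof.
case: hS => [[tens_linear _ _ _] _ _ _].
by have := tens_linear a b a' b' 1 f f' g; rewrite !scale1r.
Qed.

Lemma iso_symm (a b : Ob T) (f : Hom a b) : is_iso f -> exists g : Hom b a, is_iso g.
Proof. by case=> g [gf fg]; exists g; exists f. Qed.

Lemma tensH_iso (a b c : Ob T) (f : Hom a b) : is_iso f -> is_iso (tensH f (idm c)).
Proof.
case: hS => [[_ _ tensH_comp tensH_idm] _ _ _]; case: hK => _ idm_comp _ _ _.
case=> g [gf fg]; exists (tensH g (idm c)).
by rewrite -!tensH_comp !idm_comp gf fg !tensH_idm.
Qed.

Lemma braid_iso (a b : Ob T) : is_iso (braid a b).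
Proof. by case: hS => _ _ _ [_ _ braidK _]; exists (braid b a); rewrite !braidK. Qed.

Lemma zob_tens_iso (N : Ob T) : is_iso (0 : Hom zob (zob \ot N)).
Proof.
case: hS => [[_ _ _ tensH_idm] _ _ _]; case: hA => from_zob_0 _ _.
have idm_0 : idm (zob \ot N) = 0.
  by rewrite -tensH_idm (from_zob_0 _ (idm zob)) tensH0l.
by exists 0; rewrite !compm0 idm_0 (from_zob_0 _ (idm zob)).
Qed.

Lemma thick_iso (P : Ob T -> Prop) (a b : Ob T) (f : Hom a b) :
  thick P -> is_iso f -> P a -> P b.
Proof. by case=> _ iso_closed _ _ _; exact: iso_closed. Qed.

Lemma thick_tens_preimage (P : Ob T -> Prop) (N : Ob T) :
  thick P -> thick (fun X => P (X \ot N)).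
Proof.
move=> thP; have [P0 _ Pshift Ptri Psummand] := thP.
case: hS => [[_ _ tensH_comp tensH_idm] _ _ _]; case: hK => _ idm_comp _ _ _.
case: hX => [[shl_iso _] _ tens_dist _ _].
split.
- exact: thick_iso thP (zob_tens_iso N) P0.
- by move=> a b f /tensH_iso f_iso; exact: thick_iso thP (f_iso N).
- move=> x; split => Px.
  + have [g g_iso] := iso_symm (shl_iso x N).
    exact: thick_iso thP g_iso ((Pshift _).1 Px).
  + exact: (Pshift _).2 (thick_iso thP (shl_iso x N) Px).
- by move=> x y z f g h /(tens_dist N) /Ptri.
- move=> a b c i1 i2 p1 p2 [p1i1 p2i2 p1i2 p2i1 split_idm] Pc.
  apply: (Psummand _ _ _ (tensH i1 (idm N)) (tensH i2 (idm N))
             (tensH p1 (idm N)) (tensH p2 (idm N))) => //.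
  split; rewrite -?tensH_comp ?idm_comp ?p1i1 ?p2i2 ?p1i2 ?p2i1 ?tensH0l ?tensH_idm //.
  by rewrite -tensHDl split_idm tensH_idm.
Qed.

Lemma tensor_ideal_tensr (P : Ob T -> Prop) (M N : Ob T) :
  tensor_ideal P -> P M -> P (M \ot N).
Proof.
by case=> thP ideal PM; apply: thick_iso thP (braid_iso N M) (ideal N M PM).
Qed.

Lemma prime_tensor_ideal_tau_stable (P : Ob T -> Prop) (E : Ob T) :
  split_generator E -> prime_tensor_ideal P -> forall M, tau_inv E P M <-> P M.
Proof.
move=> genE [idP [x Pnx] Pprime] M; split; last exact: tensor_ideal_tensr.
case/Pprime => // PE; case: Pnx.
by apply: (genE P) PE x; case: idP.
Qed.

Lemma tau_stable_tensor_ideal (P : Ob T -> Prop) (E : Ob T) :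
  split_generator E -> thick P -> (forall M, tau_inv E P M <-> P M) ->
  tensor_ideal P.
Proof.
move=> genE thP Pstable; split=> // M N PN.
apply: (genE _ (thick_tens_preimage N thP)).
exact: thick_iso thP (braid_iso N E) ((Pstable N).2 PN).
Qed.

End TensorTriangulated.

Theorem mainTheorem6 (k : fieldType) (T : ttdata k)
  (hT : is_tt_category T) (hM : M_compatible T)
  (E : Ob T) (hE : split_generator E) :
  (forall P : Ob T -> Prop, Spc_tensor P <-> Spc_tau E P) /\
  (forall P : Ob T -> Prop, Spc_tau E P -> Spc_tri P).
Proof.
have [[hK hA _ _] hS hX] := hT.
split=> [P|P []//]; split.
- move=> [thP primeP]; have [prime_thP _] := (hM P thP).1 primeP.
  by split; [|exact: prime_tensor_ideal_tau_stable].
- move=> [[thP prime_thP] stableP]; split=> //.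
  apply/(hM P thP); split=> //.
  exact: (tau_stable_tensor_ideal hK hA hS hX hE thP stableP).
Qed.
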